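(* Let $(m,n)$ be coprime positive integers, $\gamma\in D_{m,n}$, and let $\gamma^*\in D_{m+n,n}$ be obtained by inserting one horizontal unit step immediately after each vertical step of $\gamma$. Then $|O(\gamma^* )|=|O(\gamma)|+\frac{n(n-1)}{2}$ and $\mathrm{area}(\gamma)=\mathrm{area}(\gamma^* )$.
   Context: For coprime positive $(m,n)$, an $(m,n)$-Dyck path is a lattice path from $(0,0)$ to $(m,n)$ of $m$ horizontal unit steps and $n$ vertical unit steps lying weakly above $y=(n/m)x$; $D_{m,n}$ is the set of them. $\mathrm{area}(\gamma)$ is the number of complete unit lattice squares between $\gamma$ and its diagonal ($y=(n/m)x$ for $\gamma\in D_{m,n}$, $y=(n/(m+n))x$ for $\gamma^*\in D_{m+n,n}$). $O(\gamma)$ is the set of pairs $(r_h,r_v)$ with $r_h$ a horizontal step and $r_v$ a vertical step of $\gamma$, $r_v$ appearing after $r_h$. *)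

From mathcomp Require Import all_boot.
Set Implicit Arguments. Unset Strict Implicit. Unset Printing Implicit Defensive.

(* A lattice path is a sequence of unit steps: [true] = vertical (north) step,
   [false] = horizontal (east) step.  The path starts at (0,0). *)
Definition lpath := seq bool.

Definition hpos (p : lpath) (t : nat) : nat := count negb (take t p).
Definition vpos (p : lpath) (t : nat) : nat := count id (take t p).

(* (a,b)-Dyck path: a horizontal and b vertical steps, from (0,0) to (a,b),
   every lattice point of the path weakly above y = (b/a) x,
   i.e. b * x <= a * y. (Checking the vertices suffices, as the path is
   piecewise linear between them.) *)
Definition dyck (a b : nat) (p : lpath) : bool :=
  [&& count negb p == a, count id p == b &
      all (fun t => b * hpos p t <= a * vpos p t) (iota 0 (size p).+1)].

(* The unit square [i,i+1] x [j,j+1] lies weakly below the path p: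
   the path has a horizontal step from (i,k) to (i+1,k) with k >= j+1. *)
Definition below_path (p : lpath) (i j : nat) : bool :=
  has (fun t => ~~ nth false p t && (hpos p t == i) && (j < vpos p t))
      (iota 0 (size p)).

(* The unit square [i,i+1] x [j,j+1] lies weakly above y = (b/a) x:
   its lower-right corner (i+1, j) satisfies b*(i+1) <= a*j. *)
Definition above_diag (a b i j : nat) : bool := b * i.+1 <= a * j.

Definition area (a b : nat) (p : lpath) : nat :=
  #|[set ij : 'I_a * 'I_b |
      below_path p ij.1 ij.2 && above_diag a b ij.1 ij.2]|.

Definition O (p : lpath) : {set 'I_(size p) * 'I_(size p)} :=
  [set rr : 'I_(size p) * 'I_(size p) | [&& (rr.1 < rr.2)%N, ~~ nth false p rr.1 & nth false p rr.2]].

Definition star (p : lpath) : lpath :=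
  flatten (map (fun s : bool => if s then [:: true; false] else [:: false]) p).

From mathcomp Require Import all_boot.
From mathcomp Require Import zify.

(* In [star g] every vertical
   step of [g] is followed by a new horizontal step, which precedes exactly
   the later vertical steps; summed over the [n] vertical steps this adds
   [(n-1) + ... + 0 = 'C(n, 2)] pairs to [O].  For the area, the cell
   [(i, j)] under [g] becomes the cell [(i + j, j)] under [star g], since the
   [j] vertical steps below height [j] each contributed one extra column; and
   [n (i + 1) <= m j] iff [n (i + j + 1) <= (m + n) j], so the shift
   [(i, j) |-> (i + j, j)] is a bijection between the two sets of cells. *)

Lemma star_cons_true p : star (true :: p) = [:: true, false & star p].
Proof. by []. Qed.

Lemma star_cons_false p : star (false :: p) = false :: star p.
Proof. by []. Qed.

Lemma count_id_star p : count id (star p) = count id p.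
Proof. by elim: p => [|[] p IHp] //=; rewrite IHp. Qed.

Lemma count_negb_star p : count negb (star p) = count negb p + count id p.
Proof. by elim: p => [|[] p IHp] //=; rewrite IHp; lia. Qed.

Fixpoint hv_pairs (p : lpath) : nat :=
  if p is x :: q then (if x then 0 else count id q) + hv_pairs q else 0.

Lemma hv_pairs_star p : hv_pairs (star p) = hv_pairs p + 'C(count id p, 2).
Proof.
elim: p => [|[] p IHp] //=; rewrite count_id_star IHp.
  by rewrite add1n binS bin1; lia.
by rewrite add0n; lia.
Qed.

Lemma card_O_double_sum p :
  #|O p| = \sum_(s < size p) \sum_(t < size p)
             [&& s < t, ~~ nth false p s & nth false p t].
Proof.
rewrite pair_big /= -sum1_card big_mkcond /=.
by apply: eq_bigr => -[s t] _; rewrite inE; case: ifP.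
Qed.

Lemma sum_nth_count p : \sum_(t < size p) nth false p t = count id p.
Proof.
elim: p => [|x p IHp]; first by rewrite big_ord0.
by rewrite big_ord_recl /= -IHp.
Qed.

Lemma card_O p : #|O p| = hv_pairs p.
Proof.
rewrite card_O_double_sum; elim: p => [|x p IHp]; first by rewrite big_ord0.
rewrite /= big_ord_recl big_ord_recl add0n -IHp; congr (_ + _).
  case: x; first by rewrite big1.
  by rewrite -sum_nth_count; apply: eq_bigr.
by apply: eq_bigr => s _; rewrite big_ord_recl.
Qed.

Lemma card_O_star p : #|O (star p)| = #|O p| + 'C(count id p, 2).
Proof. by rewrite !card_O hv_pairs_star. Qed.

Lemma has_iota_cons (f : bool -> nat -> nat -> bool) x p :
  has (fun t => f (nth false (x :: p) t) (hpos (x :: p) t) (vpos (x :: p) t))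
      (iota 0 (size p).+1)
  = f x 0 0 || has (fun t => f (nth false p t) (~~ x + hpos p t) (x + vpos p t))
                   (iota 0 (size p)).
Proof. by rewrite /= -(addn0 1) iotaDl has_map. Qed.

Lemma has_horizontal_step_at p i :
  has (fun t => ~~ nth false p t && (hpos p t == i)) (iota 0 (size p))
  = (i < count negb p).
Proof.
elim: p i => [|x p IHp] i //.
rewrite (has_iota_cons (fun b h _ => ~~ b && (h == i))).
case: x => /=; first by rewrite -IHp.
case: i => [|i] //=.
by rewrite ltnS -IHp; apply: eq_has => t; rewrite add1n eqSS.
Qed.

Lemma below_path_false_cons p i j :
  below_path (false :: p) i j = if i is i'.+1 then below_path p i' j else false.
Proof.
rewrite /below_path (has_iota_cons (fun b h v => ~~ b && (h == i) && (j < v))).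
case: i => [|i] /=; first by apply/hasP => -[t _ /andP[/andP[]]].
by apply: eq_has => t; rewrite add1n eqSS.
Qed.

Lemma below_path_true_cons p i j :
  below_path (true :: p) i j =
  if j is j'.+1 then below_path p i j' else i < count negb p.
Proof.
rewrite /below_path (has_iota_cons (fun b h v => ~~ b && (h == i) && (j < v))).
case: j => [|j] /=.
  by rewrite -has_horizontal_step_at; apply: eq_has => t; rewrite andbT.
by apply: eq_has => t; rewrite add1n ltnS.
Qed.

Lemma below_path_star_le p i j : below_path (star p) i j -> j <= i.
Proof.
elim: p i j => [|[] p IHp] i j //.
  rewrite star_cons_true below_path_true_cons; case: j => [|j] //.
  by rewrite below_path_false_cons; case: i => [|i] // /IHp.
by rewrite star_cons_false below_path_false_cons; case: i => [|i] // /IHp; lia.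
Qed.

Lemma below_path_star_shift p i j : i < count negb p ->
  below_path (star p) (i + j) j = below_path p i j.
Proof.
elim: p i j => [|[] p IHp] i j //.
  rewrite star_cons_true !below_path_true_cons => /= lt_i_p; case: j => [|j].
    by rewrite /= addn0 count_negb_star lt_i_p; apply/idP; lia.
  by rewrite below_path_false_cons addnS IHp.
rewrite star_cons_false !below_path_false_cons; case: i => [|i] lt_i_p.
  by case: j => [|j] //=; apply/negP => /below_path_star_le; lia.
by rewrite addSn IHp.
Qed.

Lemma shift_cell_subproof {a b} (i : 'I_a) (j : 'I_b) : i + j < a + b.
Proof. by rewrite -addSn leq_add // ltnW. Qed.

Definition shift_cell a b (ij : 'I_a * 'I_b) : 'I_(a + b) * 'I_b :=
  (Ordinal (shift_cell_subproof ij.1 ij.2), ij.2).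

Lemma shift_cell_inj a b : injective (@shift_cell a b).
Proof.
move=> [i j] [i' j'] [eq_sum eq_j]; subst j'.
by congr pair; apply: val_inj => /=; lia.
Qed.

Lemma area_star m n p : 0 < m -> count negb p = m ->
  area m n p = area (m + n) n (star p).
Proof.
move=> m_gt0 count_p; rewrite /area -(card_imset _ (@shift_cell_inj m n)).
apply: eq_card => -[k j]; rewrite !inE /above_diag /=.
apply/imsetP/idP.
  case=> -[i j'] /[!inE] /= /andP[below diag] [-> ->] /=.
  by rewrite below_path_star_shift ?count_p // below; nia.
move=> /andP[below diag]; have /below_path_star_le le_jk := below.
have diag' : n * (k - j).+1 <= m * j by nia.
have lt_kj_m : k - j < m.
  have : m * j < m * n by rewrite ltn_pmul2l.
  by nia.
exists (Ordinal lt_kj_m, j); last by congr pair; apply: val_inj; rewrite /= subnK.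
by rewrite inE /= diag' andbT -below_path_star_shift ?count_p // subnK.
Qed.

Theorem mainTheorem6 (m n : nat) (g : lpath) :
  0 < m -> 0 < n -> coprime m n -> dyck m n g ->
  #|O (star g)| = #|O g| + n * (n - 1) %/ 2 /\
  area m n g = area (m + n) n (star g).
Proof.
move=> m_gt0 _ _ /and3P[/eqP count_h /eqP count_v _]; split.
  by rewrite card_O_star count_v bin2 divn2 subn1.
exact: area_star.
Qed.
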